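(* Let $\kappa\ge\omega_0$ be a cardinal and let $(X,\tau)$ be a Lindelöf $\kappa$-exclusive space. Then $X$ is a D-space.
   Context: A space is Lindelöf if every open cover has a countable subcover (no separation axiom assumed). For a cardinal $\kappa$, $(X,\tau)$ is $\kappa$-exclusive if for every $x\in X$, every open neighborhood $U$ of $x$, and every $A\subseteq U$ with $x\notin A$ and $|A|\le\kappa$, there is an open neighborhood $V$ of $x$ with $V\subseteq U\setminus A$. An open neighborhood assignment is a function $N:X\to\tau$ with $x\in N(x)$ for all $x$. $X$ is a D-space if for every open neighborhood assignment $N$ there is a closed discrete $D\subseteq X$ with $\bigcup_{d\in D}N(d)=X$. *)

From HB Require Import structures.
From mathcomp Require Import all_boot all_order.
From mathcomp Require Import boolp classical_sets functions cardinality topology.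
Set Implicit Arguments. Unset Strict Implicit. Unset Printing Implicit Defensive.
Local Open Scope classical_set_scope.
Local Open Scope card_scope.

Definition lindelof (X : topologicalType) : Prop :=
  forall C : set (set X),
    (forall U, C U -> open U) -> \bigcup_(U in C) U = setT ->
    exists C' : set (set X),
      [/\ C' `<=` C, countable C' & \bigcup_(U in C') U = setT].

(* The cardinal kappa is represented as the cardinality of a type K;
   |A| <= kappa is  A #<= [set: K]. *)
Definition kappa_exclusive (K : Type) (X : topologicalType) : Prop :=
  forall (x : X) (U A : set X), open U -> U x -> A `<=` U -> ~ A x ->
    A #<= [set: K] ->
    exists V : set X, [/\ open V, V x & V `<=` U `\` A].

Definition discrete_subset (X : topologicalType) (D : set X) : Prop :=
  forall d, D d -> exists U : set X, [/\ open U, U d & U `&` D = [set d]].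

Definition closed_discrete (X : topologicalType) (D : set X) : Prop :=
  closed D /\ discrete_subset D.

Definition D_space (X : topologicalType) : Prop :=
  forall N : X -> set X, (forall x, open (N x) /\ N x x) ->
    exists D : set X, closed_discrete D /\ \bigcup_(d in D) N d = setT.

From mathcomp Require Import all_boot all_order.
From mathcomp Require Import boolp classical_sets functions cardinality topology.
Local Open Scope classical_set_scope.
Local Open Scope card_scope.
Set Implicit Arguments.

(* In a kappa-exclusive space every set of size at most kappa is closed
   discrete: a point outside it, or a point of it, can be separated from the
   rest of the set by an open neighbourhood.  Since kappa >= omega_0, this
   applies to countable sets.  Lindelöfness turns any neighbourhood assignment
   into a cover by countably many of its neighbourhoods, whose centres then
   form the required closed discrete kernel. *)

Section KappaExclusive.
Variables (K : Type) (X : topologicalType).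
Hypothesis exclusiveX : kappa_exclusive K X.

Lemma kappa_exclusive_closed (A : set X) : A #<= [set: K] -> closed A.
Proof.
move=> smallA x clAx; apply/not_notP => nAx.
have [V [oV Vx VA]] := exclusiveX x openT I (fun _ _ => I) nAx smallA.
have /clAx [y [Ay Vy]] : nbhs x V by apply: open_nbhs_nbhs.
by have [_] := VA y Vy.
Qed.

Lemma kappa_exclusive_discrete (A : set X) :
  A #<= [set: K] -> discrete_subset A.
Proof.
move=> smallA a Aa.
have smallAa : A `\ a #<= [set: K].
  by apply: card_le_trans smallA; apply: subset_card_le => y [].
have [V [oV Va VAa]] :=
  exclusiveX a openT I (fun _ _ => I) (fun h : (A `\ a) a => h.2 erefl) smallAa.
exists V; split => //; apply/seteqP; split => y; last by move=> /= ->.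
move=> [Vy Ay]; apply/not_notP => nya.
by have [_] := VAa y Vy; apply; split.
Qed.

Lemma kappa_exclusive_countable_closed_discrete (A : set X) :
  [set: nat] #<= [set: K] -> countable A -> closed_discrete A.
Proof.
move=> natK cA; have smallA : A #<= [set: K] by apply: card_le_trans cA natK.
by split; [exact: kappa_exclusive_closed | exact: kappa_exclusive_discrete].
Qed.

End KappaExclusive.

Lemma lindelof_countable_kernel (X : topologicalType) (N : X -> set X) :
  lindelof X -> (forall x, open (N x) /\ N x x) ->
  exists D : set X, countable D /\ \bigcup_(d in D) N d = setT.
Proof.
move=> lindX nbhsN.
have [[x0 _]|emptyX] := pselect (exists x : X, True); last first.
  exists set0; split; first exact: countable0.
  by apply/seteqP; split => // x _; case: emptyX; exists x.
have openN U : range N U -> open U by move=> [x _ <-]; exact: (nbhsN x).1.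
have coverN : \bigcup_(U in range N) U = setT.
  by apply/seteqP; split => // x _; exists (N x); [exists x | exact: (nbhsN x).2].
have [C [CN cC coverC]] := lindX (range N) openN coverN.
pose centre U := xget x0 (fun y => N y = U).
have centreK U : C U -> N (centre U) = U.
  by move=> /CN [y _ NyU]; apply: (xgetPex x0 (P := fun y => N y = U)); exists y.
exists (centre @` C); split; first exact: card_le_trans (card_image_le _ _) cC.
apply/seteqP; split => // x _.
have [U CU Ux] : (\bigcup_(U in C) U) x by rewrite coverC.
by exists (centre U); [exists U | rewrite centreK].
Qed.

Theorem mainTheorem5 (K : Type) (X : topologicalType) :
  [set: nat] #<= [set: K] -> lindelof X -> kappa_exclusive K X -> D_space X.
Proof.
move=> natK lindX exclusiveX N nbhsN.
have [D [cD coverD]] := lindelof_countable_kernel N lindX nbhsN.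
exists D; split => //.
exact: kappa_exclusive_countable_closed_discrete exclusiveX D natK cD.
Qed.
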